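(* Let $D\ge1$, let $Q\ge 2$ be an integer, and let $q=(3Q)^D$. Consider the cubic lattice $\mathbb{Z}^D$ in which each edge is independently an error (element of the random set $E$) with probability at most $p$. For $n\ge0$ and a box $\Sigma_n$ of side length $Q^n$, let $A_n$ be the event that some level-$n$ chunk of $E$ has at least one vertex in $\Sigma_n$, and let $a_n=\sup_{\Sigma_n}\Pr(A_n)$ over all boxes of side $Q^n$. Suppose $a_0\le p$. Then for every $n\ge1$, $a_n\le (q\,a_{n-1})^2$, and consequently for every $m\ge0$ $$\Pr(A_m)\le \big(q^2 p\big)^{2^m}=\big((3Q)^{2D}p\big)^{2^m}.$$
   Context: Distances are graph distances on $\mathbb{Z}^D$. For a set of edges (chunk) $\varepsilon$, $C(\varepsilon)$ is the set of vertices incident to its edges, and its width is $\max_{k,k'\in C(\varepsilon)}d(k,k')$. A level-$0$ chunk is a single error edge; a level-$n$ chunk is a union of two disjoint level-$(n-1)$ chunks whose width is at most $Q^n$. For a box $\Sigma_n$ of side $Q^n$, $\Sigma_n^+$ denotes the concentric box of side $3Q^n$, which is a disjoint union of $(3Q)^D$ boxes of side $Q^{n-1}$. *)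

From HB Require Import structures.
From mathcomp Require Import all_boot all_order all_algebra.
From Stdlib Require Import ClassicalEpsilon.
Set Implicit Arguments. Unset Strict Implicit. Unset Printing Implicit Defensive.
Import Order.TTheory GRing.Theory Num.Theory.
Local Open Scope ring_scope.

(* Vertices of Z^D and edges.  An edge is encoded canonically as (x, i):
   the edge between x and x + e_i. *)
Definition Vertex (D : nat) := {ffun 'I_D -> int}.
Definition Edge (D : nat) := (Vertex D * 'I_D)%type.

Definition shift D (x : Vertex D) (i : 'I_D) : Vertex D :=
  [ffun j => x j + Posz (nat_of_bool (j == i))].

Definition dist D (x y : Vertex D) : nat := \sum_(i < D) absz (x i - y i).

Definition chunk_vertices D (c : seq (Edge D)) : seq (Vertex D) :=
  flatten [seq [:: e.1; shift e.1 e.2] | e <- c].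

Definition width D (c : seq (Edge D)) : nat :=
  \max_(k <- chunk_vertices c) \max_(k' <- chunk_vertices c) dist k k'.

Inductive chunk_lvl D (Q : nat) : nat -> seq (Edge D) -> Prop :=
| chunk0 (e : Edge D) : chunk_lvl Q 0 [:: e]
| chunkS (n : nat) (c1 c2 : seq (Edge D)) :
    chunk_lvl Q n c1 -> chunk_lvl Q n c2 ->
    ~~ has (fun e => e \in c2) c1 ->
    (width (c1 ++ c2) <= Q ^ n.+1)%N ->
    chunk_lvl Q n.+1 (c1 ++ c2).

Definition in_box D (c : Vertex D) (L : nat) (x : Vertex D) : bool :=
  [forall i, (c i <= x i)%R && (x i < c i + Posz L)%R].

Definition A_event D (Q n : nat) (c : Vertex D) (E : Edge D -> Prop) : Prop :=
  exists ch : seq (Edge D), chunk_lvl Q n ch /\ (forall e, e \in ch -> E e) /\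
    has (in_box c (Q ^ n)) (chunk_vertices ch).

(* Finite window: edges with both endpoints in the box of corner c0, side L *)
Definition vtx D (c0 : Vertex D) (L : nat) (k : {ffun 'I_D -> 'I_L}) : Vertex D :=
  [ffun i => c0 i + Posz (k i)].

Definition WinT (D L : nat) :=
  {w : ({ffun 'I_D -> 'I_L} * 'I_D)%type | ((w.1 w.2).+1 < L)%N}.

Definition win_edge D (c0 : Vertex D) (L : nat) (w : WinT D L) : Edge D :=
  (vtx c0 (val w).1, (val w).2).

Definition indic (R : pzRingType) (P : Prop) : R :=
  if excluded_middle_informative P then 1%R else 0%R.

(* Probability of an event A (a property of the random error set E), computed
   under the independent product measure (edge e is an error with probability
   pe e) on the edges of the window; edges outside the window are taken as
   non-errors (irrelevant for events depending only on window edges). *)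
Definition Pr_win (R : realFieldType) D (pe : Edge D -> R) (c0 : Vertex D) (L : nat)
    (A : (Edge D -> Prop) -> Prop) : R :=
  (\sum_(S : {set WinT D L})
     (\prod_(w in S) pe (win_edge c0 w)) *
     (\prod_(w in ~: S) (1 - pe (win_edge c0 w))) *
     indic R (A (fun e => exists2 w, w \in S & e = win_edge c0 w)))%R.

(* Pr(A_n) for the box Sigma_n with corner c, computed on the window
   Sigma_n^+ (concentric box of side 3 Q^n), which contains every vertex of
   any level-n chunk meeting Sigma_n. *)
Definition PrA (R : realFieldType) D (Q : nat) (pe : Edge D -> R) (n : nat) (c : Vertex D) : R :=
  Pr_win pe [ffun i => (c i - Posz (Q ^ n))%R] (3 * Q ^ n) (A_event Q n c).

From HB Require Import structures.
From mathcomp Require Import all_boot all_order all_algebra.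
From mathcomp Require Import ring lra zify.
From Stdlib Require Import Classical ClassicalEpsilon.

(* A level-(m+1) chunk meeting a box of side Q^(m+1) lies in the enlarged box of side
   3 Q^(m+1), which is tiled by (3Q)^D boxes of side Q^m; the chunk is the disjoint union
   of two level-m chunks, each meeting one of these tiles.  So A_(m+1) implies that, for
   some pair of tiles, the events "a level-m chunk meets the tile" occur on disjoint sets
   of errors.  These events are increasing, so the union bound over the (3Q)^(2D) pairs
   and the van den Berg--Kesten inequality give a_(m+1) <= ((3Q)^D a_m)^2, which iterates
   to the doubly exponential bound.  All probabilities are computed by conditioning on
   the edges of a finite window one at a time; BK is proved by induction on that list,
   and probabilities computed on different windows are compared by marginalization. *)
Set Implicit Arguments. Unset Strict Implicit. Unset Printing Implicit Defensive.
Import Order.TTheory GRing.Theory Num.Theory.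
Local Open Scope ring_scope.

Section Indicator.
Context {R : realFieldType}.

Lemma indicT (P : Prop) : P -> indic R P = 1.
Proof. by rewrite /indic; case: excluded_middle_informative. Qed.

Lemma indicF (P : Prop) : ~ P -> indic R P = 0.
Proof. by rewrite /indic; case: excluded_middle_informative. Qed.

Lemma indic_ge0 (P : Prop) : 0 <= indic R P.
Proof. by rewrite /indic; case: excluded_middle_informative. Qed.

Lemma indic_le1 (P : Prop) : indic R P <= 1.
Proof. by rewrite /indic; case: excluded_middle_informative. Qed.

Lemma indic_le (P P' : Prop) : (P -> P') -> indic R P <= indic R P'.
Proof.
move=> PP'; have [p|np] := classic P; first by rewrite !indicT //; apply: PP'.
by rewrite (indicF np) indic_ge0.
Qed.

Lemma indic_eq (P P' : Prop) : (P <-> P') -> indic R P = indic R P'.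
Proof. by move=> [PP' P'P]; apply/le_anti; rewrite !indic_le. Qed.

Lemma indic_or_and (P P' : Prop) :
  indic R (P \/ P') + indic R (P /\ P') = indic R P + indic R P'.
Proof.
have [p|np] := classic P; have [p'|np'] := classic P'.
- by rewrite !indicT //; left.
- by rewrite (indicT p) (indicF np') (indicT (or_introl p)) (indicF (P := P /\ P'))
    ?addr0 ?add0r //; case.
- by rewrite (indicF np) (indicT p') (indicT (or_intror p')) (indicF (P := P /\ P'))
    ?addr0 ?add0r //; case.
- by rewrite !indicF //; case.
Qed.
End Indicator.

Section SequentialProbability.
Variables (R : realFieldType) (X : Type) (pe : X -> R).
Hypothesis pe01 : forall e, 0 <= pe e <= 1.

Definition event := (X -> Prop) -> Prop.

Definition increasing (A : event) :=
  forall E F : X -> Prop, (forall x, E x -> F x) -> A E -> A F.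

Definition with_err (e : X) (A : event) : event := fun E => A (fun y => y = e \/ E y).

(* Probability of [A] when the coordinates listed in [s] are independent errors,
   [e] with probability [pe e], and all other coordinates are not errors:
   condition on the state of each listed coordinate in turn. *)
Fixpoint Pr_seq (s : seq X) (A : event) : R :=
  match s with
  | [::] => indic R (A (fun _ => False))
  | e :: s' => (1 - pe e) * Pr_seq s' A + pe e * Pr_seq s' (with_err e A)
  end.

Lemma increasing_with_err A : increasing A -> forall e, increasing (with_err e A).
Proof. by move=> incA e E F EF; apply: incA => x [->|/EF]; [left|right]. Qed.

Lemma eq_or_and_neq (P : X -> Prop) e x : P x -> x = e \/ P x /\ x <> e.
Proof. by move=> Px; have [->|ne] := classic (x = e); [left|right]. Qed.

Lemma pe_ge0 e : 0 <= pe e. Proof. by case/andP: (pe01 e). Qed.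

Lemma subr_pe_ge0 e : 0 <= 1 - pe e. Proof. by case/andP: (pe01 e); rewrite subr_ge0. Qed.

Lemma Pr_seq_eq s A B : (forall E, A E <-> B E) -> Pr_seq s A = Pr_seq s B.
Proof.
elim: s A B => [|e s IH] A B AB /=; first exact: indic_eq.
by rewrite (IH A B AB) (IH (with_err e A) (with_err e B)) // => E; apply: AB.
Qed.

Lemma Pr_seq_le s A B : (forall E, A E -> B E) -> Pr_seq s A <= Pr_seq s B.
Proof.
elim: s A B => [|e s IH] A B AB /=; first by apply: indic_le; apply: AB.
by apply: lerD; apply: ler_wpM2l; rewrite ?pe_ge0 ?subr_pe_ge0 //; apply: IH => E; apply: AB.
Qed.

Lemma Pr_seq_ge0 s A : 0 <= Pr_seq s A.
Proof.
elim: s A => [|e s IH] A /=; first exact: indic_ge0.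
by rewrite addr_ge0 // mulr_ge0 ?pe_ge0 ?subr_pe_ge0.
Qed.

Lemma Pr_seq_or_and s A B :
  Pr_seq s (fun E => A E \/ B E) + Pr_seq s (fun E => A E /\ B E) = Pr_seq s A + Pr_seq s B.
Proof.
elim: s A B => [|e s IH] A B /=; first exact: indic_or_and.
by rewrite addrACA -!mulrDr IH (IH (with_err e A)) !mulrDr addrACA.
Qed.

Lemma Pr_seq_exists_le_sum (J : finType) s (F : J -> event) :
  Pr_seq s (fun E => exists j, F j E) <= \sum_j Pr_seq s (F j).
Proof.
elim: s F => [|e s IH] F /=.
  have [[j Fj]|nF] := classic (exists j, F j (fun=> False)).
    rewrite indicT; last by exists j.
    by rewrite (bigD1 j) //= indicT // lerDl sumr_ge0 // => i _; apply: indic_ge0.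
  by rewrite indicF // sumr_ge0 // => i _; apply: indic_ge0.
rewrite big_split /= -!mulr_sumr.
by apply: lerD; apply: ler_wpM2l; rewrite ?pe_ge0 ?subr_pe_ge0 //; apply: IH.
Qed.

Definition disj_occ (A B : event) : event := fun E =>
  exists E1 E2 : X -> Prop, (forall x, E1 x -> ~ E2 x) /\ (forall x, E1 x -> E x) /\
    (forall x, E2 x -> E x) /\ A E1 /\ B E2.

Section DisjointOccurrence.
Variables (A B : event).
Hypotheses (incA : increasing A) (incB : increasing B).

Lemma with_err_disj_occ e E :
  with_err e (disj_occ A B) E -> disj_occ (with_err e A) (with_err e B) E.
Proof.
move=> [E1 [E2 [E12 [E1E [E2E [AE1 BE2]]]]]].
exists (fun x => E1 x /\ x <> e), (fun x => E2 x /\ x <> e); split; last split; last split.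
- by move=> x [E1x _] [E2x _]; apply: E12 E1x E2x.
- by move=> x [/E1E [|]].
- by move=> x [/E2E [|]].
by split; [apply: incA AE1|apply: incB BE2] => x; apply: eq_or_and_neq.
Qed.

Lemma with_err_disj_occ_or e E : with_err e (disj_occ A B) E ->
  disj_occ (with_err e A) B E \/ disj_occ A (with_err e B) E.
Proof.
move=> [E1 [E2 [E12 [E1E [E2E [AE1 BE2]]]]]].
have [E2e|nE2e] := classic (E2 e).
  right; exists E1, (fun x => E2 x /\ x <> e); split; last split; last split.
  - by move=> x E1x [E2x _]; apply: E12 E1x E2x.
  - by move=> x E1x; case: (E1E x E1x) => // xe; subst x; case: (E12 _ E1x E2e).
  - by move=> x [/E2E [|]].
  by split=> //; apply: incB BE2 => x; apply: eq_or_and_neq.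
left; exists (fun x => E1 x /\ x <> e), E2; split; last split; last split.
- by move=> x [E1x _] E2x; apply: E12 E1x E2x.
- by move=> x [/E1E [|]].
- by move=> x E2x; case: (E2E x E2x) => // xe; subst x.
by split=> //; apply: incA AE1 => x; apply: eq_or_and_neq.
Qed.

Lemma disj_occ_with_err e E : disj_occ A B E ->
  disj_occ (with_err e A) B E /\ disj_occ A (with_err e B) E.
Proof.
move=> [E1 [E2 [E12 [E1E [E2E [AE1 BE2]]]]]].
by split; exists E1, E2; do !split => //; [apply: incA AE1|apply: incB BE2] => x; right.
Qed.
End DisjointOccurrence.

Lemma mixture_le_mul_mixture (w a0 a1 b0 b1 d c : R) : 0 <= w <= 1 ->
  d <= a0 * b0 -> c <= a1 * b1 -> c + d <= a1 * b0 + a0 * b1 ->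
  (1 - w) * d + w * c <= ((1 - w) * a0 + w * a1) * ((1 - w) * b0 + w * b1).
Proof.
(* RHS - LHS = (1-w)^2 (a0 b0 - d) + w (1-w) (a1 b0 + a0 b1 - c - d) + w^2 (a1 b1 - c). *)
move=> /andP [w0 w1] hd hc hcd.
have w1' : 0 <= 1 - w by rewrite subr_ge0.
have := ler_wpM2l (mulr_ge0 w1' w1') hd; have := ler_wpM2l (mulr_ge0 w0 w0) hc.
have := ler_wpM2l (mulr_ge0 w0 w1') hcd.
nra.
Qed.

Lemma Pr_seq_disj_occ s A B : increasing A -> increasing B ->
  Pr_seq s (disj_occ A B) <= Pr_seq s A * Pr_seq s B.
Proof.
elim: s A B => [|e s IH] A B incA incB /=.
  have [[E1 [E2 [_ [E1E [E2E [AE1 BE2]]]]]]|nAB] := classic (disj_occ A B (fun=> False));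
    last by rewrite indicF // mulr_ge0 // indic_ge0.
  rewrite (indicT (incA _ _ E1E AE1)) (indicT (incB _ _ E2E BE2)) mulr1; exact: indic_le1.
have incAe : increasing (with_err e A) by exact: increasing_with_err.
have incBe : increasing (with_err e B) by exact: increasing_with_err.
apply: mixture_le_mul_mixture; [exact: pe01|exact: IH| |].
  apply: le_trans (IH _ _ incAe incBe); apply: Pr_seq_le => E; exact: with_err_disj_occ.
pose AeB := disj_occ (with_err e A) B; pose ABe := disj_occ A (with_err e B).
apply: le_trans
  (_ : _ <= Pr_seq s (fun E => AeB E \/ ABe E) + Pr_seq s (fun E => AeB E /\ ABe E)) _.
  by apply: lerD; apply: Pr_seq_le => E;
    [apply: with_err_disj_occ_or|apply: disj_occ_with_err].
by rewrite Pr_seq_or_and; apply: lerD; apply: IH.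
Qed.
End SequentialProbability.

Section Marginals.
Variables (R : realFieldType) (X : eqType) (pe : X -> R).
Hypothesis pe01 : forall e, 0 <= pe e <= 1.
Local Notation Pr_seq := (Pr_seq pe).

Lemma Pr_seq_ge_indic t A : increasing A -> indic R (A (fun _ => False)) <= Pr_seq t A.
Proof.
elim: t A => [|e t IH] A incA //=.
have A_le : indic R (A (fun _ => False)) <= Pr_seq t (with_err e A).
  apply: le_trans (IH _ _); last exact: increasing_with_err.
  by apply: indic_le; apply: incA => x [].
have := ler_wpM2l (pe_ge0 pe01 e) A_le; have := ler_wpM2l (subr_pe_ge0 pe01 e) (IH A incA).
lra.
Qed.

Lemma Pr_seq_swap a b s A : increasing A -> Pr_seq [:: a, b & s] A = Pr_seq [:: b, a & s] A.
Proof.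
move=> incA /=.
have -> : Pr_seq s (with_err b (with_err a A)) = Pr_seq s (with_err a (with_err b A)).
  by apply: Pr_seq_eq => E; split; apply: incA => x /=; tauto.
ring.
Qed.

Lemma Pr_seq_rem x t A : increasing A -> x \in t -> Pr_seq t A = Pr_seq (x :: rem x t) A.
Proof.
elim: t A => [|y t IH] A incA //; rewrite inE /=.
have [<-|ne] := eqVneq x y; first by [].
move=> xt; rewrite (IH A incA xt) (IH (with_err y A)) //; last exact: increasing_with_err.
exact: Pr_seq_swap.
Qed.

Lemma Pr_seq_subset s t A : uniq s -> {subset s <= t} -> increasing A ->
  Pr_seq s A <= Pr_seq t A.
Proof.
elim: s t A => [|x s IH] t A /=; first by move=> _ _; apply: Pr_seq_ge_indic.
case/andP=> xs us st incA.
have xt : x \in t by apply: st; rewrite inE eqxx.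
have st' : {subset s <= rem x t}.
  move=> y ys; apply: rem_mem; last by apply: st; rewrite inE ys orbT.
  by apply: contraNneq xs => <-.
rewrite (Pr_seq_rem incA xt) /=; apply: lerD; apply: ler_wpM2l;
  rewrite ?(pe_ge0 pe01) ?(subr_pe_ge0 pe01) //; apply: IH => //; exact: increasing_with_err.
Qed.

Definition depends_on (A : event X) (t : seq X) :=
  forall E, A E -> A (fun y => E y /\ y \in t).

Lemma Pr_seq_filter t s A : increasing A -> depends_on A t ->
  Pr_seq s A = Pr_seq (filter (mem t) s) A.
Proof.
elim: s A => [|e s IH] A incA depA //=.
have incAe : increasing (with_err e A) by exact: increasing_with_err.
case: ifP => et /=.
  rewrite (IH A) // (IH (with_err e A)) // => E /depA.
  by apply: incA => x [[->|Ex] xt]; [left|right].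
have -> : Pr_seq s (with_err e A) = Pr_seq s A.
  apply: Pr_seq_eq => E; split => [|AE]; last by apply: incA AE => x; right.
  move=> /depA; apply: incA => x [[xe|//] xt].
  by move: xt; rewrite xe /= et.
by rewrite (IH A) //; ring.
Qed.

Lemma Pr_seq_marginal s t A : uniq s -> increasing A -> depends_on A t ->
  Pr_seq s A <= Pr_seq t A.
Proof.
move=> us incA depA; rewrite (Pr_seq_filter s incA depA).
by apply: Pr_seq_subset => // [|y]; rewrite ?filter_uniq // mem_filter => /andP [].
Qed.
End Marginals.

Section ProductMeasure.
Variables (R : realFieldType) (T : finType) (X : Type) (g : T -> X) (pe : X -> R).

Definition err_set (S : {set T}) : X -> Prop := fun e => exists2 w, w \in S & e = g w.

Definition subset_weight (U S : {set T}) : R :=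
  (\prod_(w in S) pe (g w)) * \prod_(w in U :\: S) (1 - pe (g w)).

Lemma sum_subsetU1 (F : {set T} -> R) x (U : {set T}) : x \notin U ->
  \sum_(S : {set T} | S \subset x |: U) F S =
  \sum_(S : {set T} | S \subset U) F S + \sum_(S : {set T} | S \subset U) F (x |: S).
Proof.
move=> xU; rewrite (bigID (fun S : {set T} => x \in S)) /= addrC; congr (_ + _).
  apply: eq_bigl => S; apply/andP/idP => [[/subsetP SxU xS]|/subsetP SU].
    apply/subsetP => y yS; move: (SxU y yS); rewrite !inE; case/orP => // /eqP yx.
    by rewrite -yx yS in xS.
  split; last by apply: contra xU => /SU.
  by apply/subsetP => y /SU yU; rewrite !inE yU orbT.
rewrite (reindex_onto (fun S : {set T} => x |: S) (fun S => S :\ x)) /=; last first.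
  by move=> S /andP [_ xS]; rewrite setD1K.
apply: eq_bigl => S; rewrite setU11 andbT.
apply/andP/idP => [[SxU /eqP <-]|SU].
  apply/subsetP => y; rewrite in_setD1 => /andP [yx /(subsetP SxU)].
  by rewrite in_setU1 (negbTE yx).
have xS : x \notin S by apply: contra xU => /(subsetP SU).
split; first by rewrite setUS.
by apply/eqP/setP => y; rewrite !inE; case: eqP => [->|] //=; rewrite (negbTE xS).
Qed.

Lemma subset_weightU1 x (U S : {set T}) : x \notin U -> S \subset U ->
  subset_weight (x |: U) S = (1 - pe (g x)) * subset_weight U S /\
  subset_weight (x |: U) (x |: S) = pe (g x) * subset_weight U S.
Proof.
move=> xU SU; have xS : x \notin S by apply: contra xU => /(subsetP SU).
rewrite /subset_weight big_setU1 //=; split; last first.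
  have -> : (x |: U) :\: (x |: S) = U :\: S.
    by apply/setP => y; rewrite !inE; case: eqVneq => [->|]; rewrite ?(negbTE xU) ?andbF.
  by rewrite mulrA.
have -> : (x |: U) :\: S = x |: (U :\: S).
  by apply/setP => y; rewrite !inE; case: eqVneq => [->|]; rewrite ?(negbTE xS).
by rewrite big_setU1 /= ?inE ?negb_and ?xU ?orbT //; ring.
Qed.

Lemma err_setU1 x (S : {set T}) A : increasing A ->
  A (err_set (x |: S)) <-> with_err (g x) A (err_set S).
Proof.
move=> incA; split; apply: incA => e.
  by case=> w; rewrite !inE => /orP [/eqP ->|wS] ->; [left|right; exists w].
case=> [->|[w wS ->]]; first by exists x; rewrite ?setU11.
by exists w; rewrite // inE wS orbT.
Qed.

Lemma sum_subsets_Pr_seq r A : uniq r -> increasing A ->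
  \sum_(S : {set T} | S \subset [set x in r])
    subset_weight [set x in r] S * indic R (A (err_set S)) = Pr_seq pe (map g r) A.
Proof.
elim: r A => [|x r IH] A /=.
  move=> _ incA; have -> : [set x in [::]] = set0 :> {set T} by apply/setP => y; rewrite !inE.
  rewrite (eq_bigl (pred1 set0)) => [|S]; last by rewrite subset0.
  rewrite big_pred1_eq /subset_weight setDv !big_set0 !mul1r; apply: indic_eq.
  by split; apply: incA => // y [w]; rewrite inE.
case/andP=> xr ur incA.
have -> : [set y in x :: r] = x |: [set y in r] by apply/setP => y; rewrite !inE.
have xU : x \notin [set y in r] by rewrite inE.
have incAx : increasing (with_err (g x) A) by exact: increasing_with_err.
rewrite sum_subsetU1 // -(IH A) // -(IH _ ur incAx) !mulr_sumr.
congr (_ + _); apply: eq_bigr => S SU; have [wS wxS] := subset_weightU1 xU SU.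
  by rewrite wS -mulrA.
by rewrite wxS (indic_eq (err_setU1 x S incA)) -mulrA.
Qed.

Lemma sum_sets_Pr_seq A : increasing A ->
  \sum_(S : {set T}) (\prod_(w in S) pe (g w)) * (\prod_(w in ~: S) (1 - pe (g w))) *
    indic R (A (err_set S)) = Pr_seq pe (map g (enum T)) A.
Proof.
move=> incA; rewrite -sum_subsets_Pr_seq ?enum_uniq //.
have -> : [set x in enum T] = setT by apply/setP => y; rewrite !inE mem_enum.
rewrite [RHS](eq_bigl predT) => [|S]; last by rewrite subsetT.
by apply: eq_bigr => S _; rewrite /subset_weight setTD.
Qed.
End ProductMeasure.

Lemma iterated_square_bound (R : realFieldType) (T : Type) (a : nat -> T -> R) (k p : R) :
  1 <= k -> (forall n x, 0 <= a n x) -> (forall x, a 0 x <= p) ->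
  (forall m b, (forall x, a m x <= b) -> forall x, a m.+1 x <= (k * b) ^+ 2) ->
  forall m x, a m x <= (k ^+ 2 * p) ^+ (2 ^ m).
Proof.
move=> k1 a_ge0 a0_le a_succ.
have k2_gt0 : 0 < k ^+ 2 by rewrite exprn_gt0 // (lt_le_trans ltr01 k1).
suff ka_le m x : k ^+ 2 * a m x <= (k ^+ 2 * p) ^+ (2 ^ m).
  by move=> m x; apply: le_trans (ka_le m x); rewrite ler_peMl // (le_trans k1) // ler_eXnr.
elim: m x => [|m IH] x; first by rewrite expn0 expr1 ler_wpM2l // ltW.
have am_le x' : a m x' <= (k ^+ 2 * p) ^+ (2 ^ m) / k ^+ 2.
  by rewrite ler_pdivlMr // mulrC.
apply: le_trans (ler_wpM2l (ltW k2_gt0) (a_succ _ _ am_le x)) _.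
rewrite expnSr exprM le_eqVlt; apply/orP; left; apply/eqP.
by field; rewrite gt_eqF // (lt_le_trans ltr01 k1).
Qed.

Section Geometry.
Variables (D Q : nat).
Local Notation V := (Vertex D).

Lemma dist_coord (x y : V) i : (absz (x i - y i) <= dist x y)%N.
Proof. by rewrite /dist (bigD1 i) //= leq_addr. Qed.

Lemma distC (x y : V) : dist x y = dist y x.
Proof. by apply: eq_bigr => i _; rewrite -abszN opprB. Qed.

Lemma distxx (x : V) : dist x x = 0%N.
Proof. by rewrite /dist big1 // => i _; rewrite subrr. Qed.

Lemma dist_shift (x : V) i : dist x (shift x i) = 1%N.
Proof.
rewrite /dist (bigD1 i) //= big1 => [|j ji]; rewrite /shift ffunE.
  by rewrite eqxx opprD addrA subrr.
by rewrite (negbTE ji) addr0 subrr.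
Qed.

Lemma mem_chunk_vertices (c : seq (Edge D)) e : e \in c ->
  e.1 \in chunk_vertices c /\ shift e.1 e.2 \in chunk_vertices c.
Proof.
rewrite /chunk_vertices; elim: c => [|e' c IH] //; rewrite inE /= => /orP [/eqP ->|/IH].
  by rewrite !inE !eqxx orbT.
by move=> [h1 h2]; rewrite !inE h1 h2 !orbT.
Qed.

Lemma chunk_vertices_cat (c1 c2 : seq (Edge D)) :
  chunk_vertices (c1 ++ c2) = chunk_vertices c1 ++ chunk_vertices c2.
Proof. by rewrite /chunk_vertices map_cat flatten_cat. Qed.

Lemma dist_le_width (c : seq (Edge D)) k k' :
  k \in chunk_vertices c -> k' \in chunk_vertices c -> (dist k k' <= width c)%N.
Proof.
move=> kc k'c; rewrite /width.
apply: leq_trans (@leq_bigmax_seq _ _ xpredT (fun k' => dist k k') k' k'c isT) _.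
exact: (@leq_bigmax_seq _ _ xpredT (fun k => \max_(k' <- chunk_vertices c) dist k k') k kc isT).
Qed.

Lemma chunk_width_le n (ch : seq (Edge D)) : chunk_lvl Q n ch -> (width ch <= Q ^ n)%N.
Proof.
case=> [e|m c1 c2 _ _ _ //].
rewrite expn0; apply/bigmax_leqP_seq => k kc _; apply/bigmax_leqP_seq => k' k'c _.
move: kc k'c; rewrite /chunk_vertices /= !inE.
by case/orP=> /eqP -> /orP [] /eqP ->; rewrite ?distxx ?dist_shift // distC dist_shift.
Qed.

Lemma chunk_nonempty n (ch : seq (Edge D)) : chunk_lvl Q n ch -> exists e, e \in ch.
Proof.
elim=> [e|m c1 c2 _ [e ec1] _ _ _ _]; first by exists e; rewrite inE.
by exists e; rewrite mem_cat ec1.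
Qed.

Lemma in_box_enlarge (c v x : V) L : in_box c L v -> (dist x v <= L)%N ->
  in_box [ffun i => c i - Posz L] (3 * L) x.
Proof.
move=> /forallP vc xv; apply/forallP => i; rewrite ffunE.
have := dist_coord x v i; have /andP := vc i; lia.
Qed.

Lemma chunk_in_window n (ch : seq (Edge D)) (c v x : V) : chunk_lvl Q n ch ->
  v \in chunk_vertices ch -> in_box c (Q ^ n) v -> x \in chunk_vertices ch ->
  in_box [ffun i => c i - Posz (Q ^ n)] (3 * Q ^ n) x.
Proof.
move=> chn vch vc xch; apply: in_box_enlarge vc _.
exact: leq_trans (dist_le_width xch vch) (chunk_width_le chn).
Qed.

Definition window_edges (c0 : V) L := map (@win_edge D c0 L) (enum [set: WinT D L]).

Lemma win_edge_inj (c0 : V) L : injective (@win_edge D c0 L).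
Proof.
move=> [[k1 i1] p1] [[k2 i2] p2]; rewrite /win_edge /= => -[k12 i12].
apply: val_inj; congr (_, _) => //=; apply/ffunP => j.
have := congr1 (fun f : V => f j) k12; rewrite /vtx !ffunE => /addrI [] kj.
exact: ord_inj.
Qed.

Lemma window_edges_uniq c0 L : uniq (window_edges c0 L).
Proof. by rewrite map_inj_uniq ?enum_uniq //; apply: win_edge_inj. Qed.

Lemma mem_window_edges (c0 : V) L (e : Edge D) :
  in_box c0 L e.1 -> in_box c0 L (shift e.1 e.2) -> e \in window_edges c0 L.
Proof.
case: e => x i /= /forallP x_in /forallP xi_in.
have L0 : (0 < L)%N by have /andP := x_in i; lia.
pose k := [ffun j => Ordinal (ltn_pmod (absz (x j - c0 j)) L0)] : {ffun 'I_D -> 'I_L}.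
have kE j : Posz (k j) = x j - c0 j.
  by rewrite ffunE /= modn_small; have /andP := x_in j; lia.
have ki : ((k i).+1 < L)%N.
  by have := xi_in i; rewrite /shift ffunE eqxx => /andP; have := kE i; lia.
have -> : (x, i) = win_edge c0 (exist _ (k, i) ki : WinT D L).
  by rewrite /win_edge /vtx /=; congr (_, _); apply/ffunP => j; rewrite ffunE kE; ring.
by apply: map_f; rewrite mem_enum inE.
Qed.

Lemma Pr_win_Pr_seq (R : realFieldType) (pe : Edge D -> R) (c0 : V) L A :
  increasing A -> Pr_win pe c0 L A = Pr_seq pe (window_edges c0 L) A.
Proof. by move=> incA; rewrite /Pr_win sum_sets_Pr_seq // /window_edges enum_setT enumT. Qed.

Definition sub_corner (c0 : V) M (j : {ffun 'I_D -> 'I_(3 * Q)}) : V :=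
  [ffun i => c0 i + Posz (j i * M)].

Lemma in_sub_box (c0 x : V) M : (0 < M)%N -> (0 < Q)%N -> in_box c0 (3 * Q * M) x ->
  exists j, in_box (sub_corner c0 M j) M x.
Proof.
move=> M0 Q0 /forallP x_in.
have Q30 : (0 < 3 * Q)%N by lia.
pose j := [ffun i => Ordinal (ltn_pmod (absz (x i - c0 i) %/ M) Q30)].
exists j; apply/forallP => i; rewrite /sub_corner !ffunE /=.
have /andP [lo hi] := x_in i.
rewrite modn_small; last by rewrite ltn_divLR //; lia.
have := divn_eq (absz (x i - c0 i)) M; have := ltn_pmod (absz (x i - c0 i)) M0.
move: (absz (x i - c0 i) %/ M)%N (absz (x i - c0 i) %% M)%N => u v.
lia.
Qed.
End Geometry.

Section Renormalization.
Variables (R : realFieldType) (D Q : nat) (pe : Edge D -> R).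
Hypothesis pe01 : forall e, 0 <= pe e <= 1.
Hypothesis Q_gt0 : (0 < Q)%N.

Definition corner_plus n (c : Vertex D) : Vertex D := [ffun i => c i - Posz (Q ^ n)].

Definition window n c := window_edges (corner_plus n c) (3 * Q ^ n).

Lemma A_event_increasing n (c : Vertex D) : increasing (A_event Q n c).
Proof. by move=> E F EF [ch [chn [chE chc]]]; exists ch; split=> //; split=> // e /chE /EF. Qed.

Lemma PrA_Pr_seq n c : PrA Q pe n c = Pr_seq pe (window n c) (A_event Q n c).
Proof. exact/Pr_win_Pr_seq/A_event_increasing. Qed.

Lemma PrA_ge0 n c : 0 <= PrA Q pe n c.
Proof. by rewrite PrA_Pr_seq Pr_seq_ge0. Qed.

Lemma A_event_depends_on_window n c : depends_on (A_event Q n c) (window n c).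
Proof.
move=> E [ch [chn [chE chc]]]; exists ch; split=> //; split=> // e ech.
split; first exact: chE.
have [v vch vc] := hasP chc; have [e1_in e2_in] := mem_chunk_vertices ech.
by apply: mem_window_edges; apply: (chunk_in_window chn vch vc).
Qed.

Definition SubIdx := {ffun 'I_D -> 'I_(3 * Q)}.

Definition A_sub m c (j : SubIdx) := A_event Q m (sub_corner (corner_plus m.+1 c) (Q ^ m) j).

Lemma A_sub_of_chunk m c ch : chunk_lvl Q m ch ->
  (forall x, x \in chunk_vertices ch -> in_box (corner_plus m.+1 c) (3 * Q ^ m.+1) x) ->
  exists j, A_sub m c j (fun e => e \in ch).
Proof.
move=> chm ch_in; have [e ech] := chunk_nonempty chm.
have [e1_in _] := mem_chunk_vertices ech.
have [j je] : exists j : SubIdx, in_box (sub_corner (corner_plus m.+1 c) (Q ^ m) j) (Q ^ m) e.1.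
  apply: (@in_sub_box D Q); [by rewrite expn_gt0; lia|lia|].
  by rewrite -mulnA -expnS; apply: ch_in.
by exists j, ch; split=> //; split=> //; apply/hasP; exists e.1.
Qed.

Lemma A_event_succ_disj_occ m c E : A_event Q m.+1 c E ->
  exists jk : SubIdx * SubIdx, disj_occ (A_sub m c jk.1) (A_sub m c jk.2) E.
Proof.
case=> ch [chn [chE /hasP [v vch vc]]].
have ch_in := chunk_in_window chn vch vc.
inversion chn as [|m' c1 c2 c1m c2m c12 _]; subst.
have [j1 A1] : exists j, A_sub m c j (fun e => e \in c1).
  by apply: A_sub_of_chunk => // x x1; apply: ch_in; rewrite chunk_vertices_cat mem_cat x1.
have [j2 A2] : exists j, A_sub m c j (fun e => e \in c2).
  apply: A_sub_of_chunk => // x x2; apply: ch_in.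
  by rewrite chunk_vertices_cat mem_cat x2 orbT.
exists (j1, j2), (fun e => e \in c1), (fun e => e \in c2); split; last split; last split.
- by move=> x x1 x2; move/hasP: c12; apply; exists x.
- by move=> x x1; apply: chE; rewrite mem_cat x1.
- by move=> x x2; apply: chE; rewrite mem_cat x2 orbT.
by [].
Qed.

Lemma PrA_succ_le m b : (forall c, PrA Q pe m c <= b) ->
  forall c, PrA Q pe m.+1 c <= (((3 * Q) ^ D)%:R * b) ^+ 2.
Proof.
move=> PrA_le c; have b0 : 0 <= b := le_trans (PrA_ge0 m c) (PrA_le c).
have A_sub_le j : Pr_seq pe (window m.+1 c) (A_sub m c j) <= b.
  apply: le_trans (PrA_le (sub_corner (corner_plus m.+1 c) (Q ^ m) j)); rewrite PrA_Pr_seq.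
  apply: Pr_seq_marginal => //; first exact: window_edges_uniq.
    exact: A_event_increasing.
  exact: A_event_depends_on_window.
pose F (jk : SubIdx * SubIdx) := disj_occ (A_sub m c jk.1) (A_sub m c jk.2).
rewrite PrA_Pr_seq; apply: le_trans (Pr_seq_le pe01 _ (@A_event_succ_disj_occ m c)) _.
apply: le_trans (Pr_seq_exists_le_sum pe01 _ F) _.
apply: le_trans (_ : \sum_(jk : SubIdx * SubIdx) b * b <= _).
  apply: ler_sum => -[j k] _; rewrite /F /=.
  have incA_sub i : increasing (A_sub m c i) by apply: A_event_increasing.
  apply: le_trans (Pr_seq_disj_occ pe01 _ (incA_sub j) (incA_sub k)) _.
  by apply: ler_pM; rewrite ?Pr_seq_ge0 ?A_sub_le.
rewrite sumr_const card_prod card_ffun !card_ord -[X in X <= _]mulr_natr natrM.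
by rewrite expr2 mulrACA [b * _]mulrC.
Qed.
End Renormalization.

Theorem mainTheorem3 (R : realFieldType) (D Q : nat) (hD : (1 <= D)%N) (hQ : (2 <= Q)%N)
  (p : R) (pe : Edge D -> R)
  (hpe : forall e, 0 <= pe e <= 1) (hpep : forall e, pe e <= p)
  (ha0 : forall c : Vertex D, PrA Q pe 0 c <= p) :
  (forall n : nat, (1 <= n)%N -> forall b : R,
     (forall c : Vertex D, PrA Q pe n.-1 c <= b) ->
     forall c : Vertex D, PrA Q pe n c <= (((3 * Q) ^ D)%:R * b) ^+ 2)
  /\
  (forall (m : nat) (c : Vertex D),
     PrA Q pe m c <= (((3 * Q) ^ (2 * D))%:R * p) ^+ (2 ^ m)).
Proof.
have Q_gt0 : (0 < Q)%N by apply: ltnW.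
split; first by case=> [//|m] _; apply: PrA_succ_le.
move=> m c; rewrite (mulnC 2) expnM natrX.
apply: (iterated_square_bound (a := PrA Q pe)) => //.
- by rewrite ler1n expn_gt0; lia.
- exact: PrA_ge0.
- exact: PrA_succ_le.
Qed.
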